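(* Let $d\ge3$, $F \leq F' \leq \mathrm{Sym}(\Omega)$ with $F$ semi-regular and $F'$ preserving each $F$-orbit, and let $n = [F':F]$. Fix a vertex $v_0$ of $T_d$. Then the stabilizer $K(F,F')$ of $v_0$ in $G(F,F')$ embeds as a cocompact lattice in the group $H_{n,d} = \mathfrak{S}_n^{V_d,\mathfrak{S}_{n-1}} \rtimes K_d$, where $K_d$ is the stabilizer of $v_0$ in $\mathrm{Aut}(T_d)$.
   Context: $\Omega$ is a set with $|\Omega|=d$; $T_d$ is the $d$-regular tree with vertex set $V_d$ and a coloring $c$ of its edges by $\Omega$ bijective on the edges at each vertex; local permutations $\sigma(g,v) = c|_{E(gv)}\circ g\circ (c|_{E(v)})^{-1}$. $G(F,F')$ is the (discrete, since $F$ is semi-regular) group of automorphisms of $T_d$ whose local permutations all lie in $F'$ and all but finitely many lie in $F$. A permutation group is semi-regular if point stabilizers are trivial. $\Sigma_n=\{0,\ldots,n-1\}$, $\mathfrak S_n=\mathrm{Sym}(\Sigma_n)$, $\mathfrak S_{n-1}$ the stabilizer of $0$; $\mathfrak{S}_n^{V_d,\mathfrak{S}_{n-1}}$ is the group of $(\sigma_v)_{v\in V_d}$ with $\sigma_v\in\mathfrak S_{n-1}$ for all but finitely many $v$, topologized so that the product group $\mathfrak{S}_{n-1}^{V_d}$ is a compact open subgroup; $H_{n,d}$ is the open subgroup of $G_{n,d}=\mathfrak{S}_n^{V_d,\mathfrak{S}_{n-1}}\rtimes\mathrm{Aut}(T_d)$ consisting of elements whose $\mathrm{Aut}(T_d)$-component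 fixes $v_0$. *)

From HB Require Import structures.
From mathcomp Require Import all_boot all_order all_fingroup.
From Stdlib Require Lists.List.
Set Implicit Arguments. Unset Strict Implicit. Unset Printing Implicit Defensive.

(* Omega = 'I_d.  Vertices of T_d are reduced words over Omega (no two equal
   consecutive letters), i.e. elements of the free product of d copies of
   Z/2; the most recent letter is the head.  The neighbour of w across the
   edge coloured a is  nbr a w  (w.a). *)

Definition reducedb d (w : seq 'I_d) : bool :=
  match w with [::] => true | a :: s => path (fun x y => x != y) a s end.

Definition nbr_seq d (a : 'I_d) (w : seq 'I_d) : seq 'I_d :=
  match w with [::] => [:: a] | b :: s => if b == a then s else a :: w end.

Lemma reduced_nbr d (a : 'I_d) (w : seq 'I_d) :
  reducedb w -> reducedb (nbr_seq a w).
Proof.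
case: w => [|b s] //=.
case: eqP => [_ | neq].
  by case: s => [|c s] //= /andP[].
move=> H; rewrite /= H andbT; apply/eqP=> E; exact: neq (esym E).
Qed.

Definition vtx d := {w : seq 'I_d | reducedb w}.

Definition nbr d (a : 'I_d) (v : vtx d) : vtx d :=
  exist _ (nbr_seq a (val v)) (reduced_nbr a (valP v)).

Definition root d : vtx d := exist _ [::] isT.

Definition adj d (u v : vtx d) : Prop := exists a, v = nbr a u.

Definition is_aut d (g : vtx d -> vtx d) : Prop :=
  bijective g /\ forall u v, adj (g u) (g v) <-> adj u v.

(* sigma(g,v) \in A : the local permutation a |-> colour of the edge
   g(edge of colour a at v) lies in A *)
Definition local_in d (A : {set {perm 'I_d}}) (g : vtx d -> vtx d) (v : vtx d)
  : Prop :=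
  exists2 s, s \in A & forall a, g (nbr a v) = nbr (s a) (g v).

Definition in_G d (F F' : {set {perm 'I_d}}) (g : vtx d -> vtx d) : Prop :=
  [/\ is_aut g, (forall v, local_in F' g v) &
      exists l : seq (vtx d), forall v, ~ local_in F g v -> v \in l].

Definition in_K d (F F' : {set {perm 'I_d}}) (g : vtx d -> vtx d) : Prop :=
  in_G F F' g /\ g (root d) = root d.

(* An element is a pair (sigma, k) with sigma : V_d -> S_n, sigma_v fixing 0
   for all but finitely many v, and k an automorphism fixing v_0. *)
Definition Hel n d := ((vtx d -> {perm 'I_n}) * (vtx d -> vtx d))%type.

(* membership in S_{n-1} = stabiliser of 0 *)
Definition fix0 n (s : {perm 'I_n}) : Prop :=
  forall i : 'I_n, nat_of_ord i = 0 -> s i = i.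

Definition in_H n d (x : Hel n d) : Prop :=
  [/\ is_aut x.2, x.2 (root d) = root d &
      exists l : seq (vtx d), forall v, ~ fix0 (x.1 v) -> v \in l].

Definition Heq n d (x y : Hel n d) : Prop := x.1 =1 y.1 /\ x.2 =1 y.2.

Definition is_one n d (x : Hel n d) : Prop :=
  (forall v, x.1 v = 1%g) /\ (forall v, x.2 v = v).

(* z = x * y in the semidirect product, where Aut(T_d) acts on S_n^{V_d} by
   (k.tau)_w = tau_{k^-1 w}:  (sigma,k)(tau,l) = (sigma (k.tau), k l),
   written without inverses as  z_{k v} = sigma_{k v} * tau_v . *)
Definition Hprod n d (x y z : Hel n d) : Prop :=
  (forall v, z.2 v = x.2 (y.2 v)) /\
  (forall v, z.1 (x.2 v) = (x.1 (x.2 v) * y.1 v)%g).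

(* basic identity neighbourhoods: (S_{n-1}^{V_d} with sigma_v = 1 on S)
   x (pointwise stabiliser of S in K_d), S finite *)
Definition U_S n d (S : seq (vtx d)) (x : Hel n d) : Prop :=
  [/\ in_H x, (forall v, fix0 (x.1 v)) &
      forall v, v \in S -> x.1 v = 1%g /\ x.2 v = v].

(* open subsets of H_{n,d} (product topology on S_n^{V,S_{n-1}} x K_d) *)
Definition H_open n d (O : Hel n d -> Prop) : Prop :=
  (forall x, O x -> in_H x) /\
  forall x, O x -> exists S, forall u z, U_S S u -> Hprod x u z -> O z.

Definition H_compact n d (C : Hel n d -> Prop) : Prop :=
  (forall x, C x -> in_H x) /\
  forall (I : Type) (O : I -> Hel n d -> Prop),
    (forall i, H_open (O i)) -> (forall x, C x -> exists i, O i x) ->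
    exists l : seq I, forall x, C x -> exists i, Stdlib.Lists.List.In i l /\ O i x.

(* a subgroup Gam is discrete: the identity is isolated *)
Definition H_discrete n d (Gam : Hel n d -> Prop) : Prop :=
  exists S : seq (vtx d), forall x, Gam x -> U_S S x -> is_one x.

Definition H_cocompact n d (Gam : Hel n d -> Prop) : Prop :=
  exists C, H_compact C /\
    forall x, in_H x -> exists g c, [/\ Gam g, C c & Hprod g c x].

(* An automorphism [g] in [K(F,F')] is sent to [embed g], whose [S_n]-coordinate
   at [g v] is the inverse of [rho(sigma(g,v))], where [rho] is the action of [F'] on
   the [n] right cosets of [F] with [F] numbered 0.  As [sigma(g,v)] lies in [F]
   iff [rho(sigma(g,v))] fixes 0, the image lies in [H_{n,d}], and the cocycle
   identity of local permutations makes this a homomorphism.  An image element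
   in the neighbourhood where all coordinates fix 0 and [g] fixes [v_0] and one
   of its neighbours has all its local permutations in the semi-regular group
   [F], hence is trivial: the image is discrete.  For cocompactness, the subgroup
   [S_{n-1}^{V_d} x| K_d] is compact (a Koenig-lemma argument over balls), and
   every [(tau, k)] lies in [embed h] times it, where [h] is built outward from
   [v_0] so that [rho(sigma(h,v))] sends 0 to [tau_{h v}^{-1}(0)]; this is
   possible because [F'] preserves the [F]-orbits, so the value of [sigma(h,v)]
   on the edge back to the parent can be prescribed together with its coset. *)

From Pilot Require Import Defs.
From HB Require Import structures.
From mathcomp Require Import all_boot all_order all_fingroup.
From mathcomp Require Import zify.
From Stdlib Require Import ClassicalEpsilon.
From Stdlib Require List.
Set Implicit Arguments. Unset Strict Implicit. Unset Printing Implicit Defensive.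

Definition depth {d} (v : vtx d) : nat := size (val v).

Section Tree.
Variable d : nat.
Implicit Types (a b : 'I_d) (s : seq 'I_d) (v : vtx d).

Lemma nbr_seq_cases a s : nbr_seq a s = a :: s \/ s = a :: nbr_seq a s.
Proof. by case: s => [|b s] /=; [left | case: eqP => [->|_]; [right | left]]. Qed.

Lemma nbrK a : involutive (@nbr d a).
Proof.
move=> [[|b s] rs]; apply: val_inj => /=; first by rewrite eqxx.
case: eqP rs => [->|_] rs /=; last by rewrite eqxx.
by case: s rs => [|c s] //= /andP[ac _]; rewrite eq_sym (negbTE ac).
Qed.

Lemma depth_nbr a v :
  depth (nbr a v) = (depth v).+1 \/ depth v = (depth (nbr a v)).+1.
Proof.
case: v => s rs; rewrite /depth /=.
by case: (nbr_seq_cases a s) => E; [left; rewrite E | right; rewrite {1}E].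
Qed.

Lemma nbr_colour_inj v : injective (fun a => nbr a v).
Proof.
case: v => [[|c s] rs] a b /(congr1 val) /=; first by case.
case: eqP => [<-|_]; case: eqP => [<-|_] // E;
  first [by move/(congr1 size): E => /=; lia | by case: E].
Qed.

Lemma parent_uniq a b v : depth v = (depth (nbr a v)).+1 ->
  depth v = (depth (nbr b v)).+1 -> a = b.
Proof.
case: v => s rs; rewrite /depth /=; case: (nbr_seq_cases a s) => [-> /=|Ea _]; first lia.
case: (nbr_seq_cases b s) => [-> /=|Eb _]; first lia.
by move: Eb; rewrite {1}Ea => -[].
Qed.

Lemma depth_nbr_head a s v : val v = a :: s -> val (nbr a v) = s.
Proof. by rewrite /= => ->; rewrite /= eqxx. Qed.

End Tree.

Section Automorphisms.
Variable d : nat.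
Implicit Types (a b : 'I_d) (u v w : vtx d) (f g : vtx d -> vtx d).
Local Notation v0 := (Defs.root d).

Definition vinv f w : vtx d := epsilon (inhabits v0) (fun v => f v = w).

Lemma vinv_spec f w : (exists v, f v = w) -> f (vinv f w) = w.
Proof. exact: epsilon_spec. Qed.

Lemma inj_surj_bij f : injective f -> (forall w, exists v, f v = w) -> bijective f.
Proof.
move=> inj_f surj_f; exists (vinv f) => [v|w]; last exact: vinv_spec.
by apply: inj_f; apply: vinv_spec; exists v.
Qed.

Lemma aut_inj f : is_aut f -> injective f.
Proof. by case=> /bij_inj. Qed.

Lemma aut_vinvK f : is_aut f -> cancel (vinv f) f.
Proof. by case=> -[g _ gK] _ w; apply: vinv_spec; exists (g w). Qed.

Lemma aut_vinvKV f : is_aut f -> cancel f (vinv f).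
Proof. by move=> A v; apply: (aut_inj A); rewrite aut_vinvK. Qed.

Lemma aut_vinv f : is_aut f -> is_aut (vinv f).
Proof.
move=> A; split; first by exists f; [exact: aut_vinvK | exact: aut_vinvKV].
by move=> u v; case: (A) => _ <-; rewrite !aut_vinvK.
Qed.

Lemma aut_comp f g : is_aut f -> is_aut g -> is_aut (fun v => f (g v)).
Proof. by move=> [bf Af] [bg Ag]; split; [exact: bij_comp | move=> u v; rewrite Af Ag]. Qed.

Lemma aut_nbr f a v : is_aut f -> exists b, f (nbr a v) = nbr b (f v).
Proof. by case=> _ Af; have [|b ->] := proj2 (Af v (nbr a v)); [exists a | exists b]. Qed.

Lemma aut_of_local f : bijective f ->
  (forall v, exists s : {perm 'I_d}, forall a, f (nbr a v) = nbr (s a) (f v)) ->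
  is_aut f.
Proof.
move=> bf loc; split=> // u v; split=> [[b Ev] | [a ->]]; last first.
  by have [s ->] := loc u; exists (s a).
have [s Hs] := loc u; exists (s^-1 b)%g; apply: (bij_inj bf).
by rewrite Ev Hs permKV.
Qed.

Lemma aut_depth f v : is_aut f -> f v0 = v0 -> depth (f v) = depth v.
Proof.
move=> A R; suff: forall k v, depth v = k -> depth (f v) = k by apply.
elim/ltn_ind=> k IH {}v Dv; subst k.
case Ev: (val v) => [|a s].
  by rewrite (_ : v = v0) ?R //; apply: val_inj; exact: Ev.
set u := nbr a v; have Eu : val u = s := depth_nbr_head Ev.
have Dfu : depth (f u) = size s by apply: IH; rewrite /depth ?Ev ?Eu.
have [b Efv] : exists b, f v = nbr b (f u) by rewrite -[v](nbrK a); exact: aut_nbr.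
rewrite Efv; case: (depth_nbr b (f u)) => [-> | Dup]; first by rewrite Dfu /depth Ev.
(* otherwise f v and the image of the parent of u are both parents of f u *)
exfalso; case Es: s Eu Dfu => [|c t] Eu Dfu; first by rewrite Dfu in Dup.
set p := nbr c u; have Ep : val p = t := depth_nbr_head Eu.
have Dfp : depth (f p) = size t by apply: IH; rewrite /depth ?Ev ?Ep ?Es //=; lia.
have [b' Efp] := aut_nbr c u A.
have bb' : b = b' by apply: (parent_uniq Dup); rewrite -Efp -/p Dfp Dfu.
have /(congr1 depth) : v = p by apply: (aut_inj A); rewrite Efv Efp bb'.
by rewrite /depth Ev Ep Es /=; lia.
Qed.

Lemma aut_of_ball_agree f (g : nat -> vtx d -> vtx d) :
  (forall N, is_aut (g N) /\ g N v0 = v0) ->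
  (forall N v, depth v < N -> f v = g N v) ->
  is_aut f /\ f v0 = v0.
Proof.
move=> Ag fg; pose M u v := (maxn (depth u) (depth v)).+1.
have f2 u v : f u = g (M u v) u /\ f v = g (M u v) v.
  by split; apply: fg; rewrite ltnS ?leq_maxl ?leq_maxr.
split; last by rewrite (fg 1) //; case: (Ag 1).
split.
  apply: inj_surj_bij => [u v | w].
    by case: (f2 u v) => -> ->; exact/aut_inj/(Ag _).1.
  have [A R] := Ag (depth w).+1; exists (vinv (g (depth w).+1) w).
  by rewrite (fg (depth w).+1) ?aut_vinvK // -(aut_depth _ A R) aut_vinvK.
by move=> u v; case: (f2 u v) => -> ->; apply: (Ag _).1.2.
Qed.

End Automorphisms.

Section LocalPermutation.
Variable d : nat.
Implicit Types (a : 'I_d) (v : vtx d) (g h : vtx d -> vtx d).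

Definition lperm g v : {perm 'I_d} :=
  odflt 1%g [pick s : {perm 'I_d} | [forall a, g (nbr a v) == nbr (s a) (g v)]].

Lemma lpermE g v (s : {perm 'I_d}) :
  (forall a, g (nbr a v) = nbr (s a) (g v)) -> lperm g v = s.
Proof.
move=> Hs; rewrite /lperm; case: pickP => [s' /forallP Hs' | /(_ s) /negP []] /=.
  by apply/permP => a; apply: (@nbr_colour_inj _ (g v)); rewrite -(eqP (Hs' a)) Hs.
by apply/forallP => a; rewrite Hs.
Qed.

Lemma local_inP (A : {set {perm 'I_d}}) g v : local_in A g v ->
  lperm g v \in A /\ forall a, g (nbr a v) = nbr (lperm g v a) (g v).
Proof. by case=> s sA Hs; rewrite (lpermE Hs). Qed.

Lemma lperm_comp (A B : {set {perm 'I_d}}) g h v :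
  local_in A g (h v) -> local_in B h v ->
  lperm (fun x => g (h x)) v = (lperm h v * lperm g (h v))%g.
Proof.
move=> /local_inP[_ Hg] /local_inP[_ Hh].
by apply: lpermE => a; rewrite Hh Hg permM.
Qed.

End LocalPermutation.

(* The root-fixing automorphism with local permutation [s0] at the root, whose
   local permutation at a vertex [a :: u] is [next (h (a :: u)) a s], where [s] is
   its local permutation at [u]; [next_back] says that the edge back to [u] is
   still sent to the edge back to [h u]. *)
Section TreeAutomorphism.
Variables (d : nat) (next : seq 'I_d -> 'I_d -> {perm 'I_d} -> {perm 'I_d}).
Variable s0 : {perm 'I_d}.
Hypothesis next_back : forall w a s, next w a s a = s a.
Implicit Types (a b : 'I_d) (v : vtx d).

Fixpoint tree_aut_rec (w : seq 'I_d) : seq 'I_d * {perm 'I_d} :=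
  if w is a :: u then
    let p := tree_aut_rec u in let hw := p.2 a :: p.1 in (hw, next hw a p.2)
  else ([::], s0).

Lemma tree_aut_rec_reduced w : reducedb w -> reducedb (tree_aut_rec w).1.
Proof.
elim: w => // a [|b w] IH //= /andP[ab rw].
have /= -> := IH rw; case: (tree_aut_rec w) => hw s /=.
by rewrite andbT -[X in _ != X](next_back (s b :: hw) b s) (inj_eq perm_inj).
Qed.

Definition tree_aut v : vtx d :=
  exist _ (tree_aut_rec (val v)).1 (tree_aut_rec_reduced (valP v)).

Definition tree_lperm v : {perm 'I_d} := (tree_aut_rec (val v)).2.

Lemma tree_aut_root : tree_aut (Defs.root d) = Defs.root d.
Proof. exact: val_inj. Qed.

Lemma tree_aut_nbr a v : tree_aut (nbr a v) = nbr (tree_lperm v a) (tree_aut v).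
Proof.
apply: val_inj; rewrite /tree_lperm /=; case: v => [[|b w] _] //=.
set s := (tree_aut_rec w).2; set hw := (tree_aut_rec w).1.
case: eqP => [->|ne] /=; first by rewrite (next_back _ a) eqxx.
by rewrite -[X in X == _](next_back (s b :: hw) b s) (inj_eq perm_inj) (introF eqP ne).
Qed.

Lemma tree_aut_inj : injective tree_aut.
Proof.
move=> [u ru] [v rv] /(congr1 val) /= E; apply: val_inj => /=.
elim: u v E {ru rv} => [|a u IH] [|b v] //= [Eab Ehu].
by have Euv := IH _ Ehu; subst v; rewrite (perm_inj Eab).
Qed.

Lemma tree_aut_surj w : exists v, tree_aut v = w.
Proof.
case: w => w rw; suff [u [ru Eu]] : exists u, reducedb u /\ (tree_aut_rec u).1 = w.
  by exists (exist _ u ru); apply: val_inj.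
elim: w rw => [|b w IH] rw; first by exists [::].
have [u [ru Eu]] := IH (path_sorted rw).
exists (((tree_aut_rec u).2)^-1%g b :: u); split; last by rewrite /= permKV Eu.
case: u ru Eu => [|a u] //= ru Eu; rewrite ru andbT; apply/eqP => Eab.
set s := (tree_aut_rec u).2 in Eu Eab; set hu := (tree_aut_rec u).1 in Eu Eab.
have Eb : b = s a by move/(congr1 (next (s a :: hu) a s)): Eab; rewrite permKV next_back.
by move: rw; rewrite -Eu Eb /= eqxx.
Qed.

Lemma tree_aut_is_aut : is_aut tree_aut.
Proof.
apply: aut_of_local; first exact: inj_surj_bij tree_aut_inj tree_aut_surj.
by move=> v; exists (tree_lperm v) => a; exact: tree_aut_nbr.
Qed.

Lemma lperm_tree_aut v : lperm tree_aut v = tree_lperm v.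
Proof. by apply: lpermE => a; exact: tree_aut_nbr. Qed.

End TreeAutomorphism.

(* The permutation representation of [F'] on the right cosets of [F], numbered
   so that the coset [F] itself gets index 0. *)
Section CosetPermutation.
Variables (gT : finGroupType) (F F' : {group gT}).
Local Open Scope group_scope.
Local Notation n := #|F' : F|.
Local Notation cosets := (rcosets F F').

Lemma group_in_rcosets : (F : {set gT}) \in cosets.
Proof. by apply/rcosetsP; exists 1; rewrite ?group1 ?rcoset1. Qed.

Lemma rcosets_rcoset X s : X \in cosets -> s \in F' -> X :* s \in cosets.
Proof.
by move=> /rcosetsP[t tF ->] sF; apply/rcosetsP; exists (t * s); rewrite ?groupM ?rcosetM.
Qed.

Definition coset0 : 'I_n := Ordinal (indexg_gt0 F' F).

Definition coset_swap : {perm 'I_n} :=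
  tperm coset0 (enum_rank_in group_in_rcosets (F : {set gT})).

Definition coset_of_index (i : 'I_n) : {set gT} := enum_val (A := cosets) (coset_swap i).

Definition index_of_coset (X : {set gT}) : 'I_n :=
  coset_swap (enum_rank_in group_in_rcosets X).

Lemma coset_of_indexK : cancel coset_of_index index_of_coset.
Proof. by move=> i; rewrite /index_of_coset /coset_of_index enum_valK_in tpermK. Qed.

Lemma index_of_cosetK : {in cosets, cancel index_of_coset coset_of_index}.
Proof. by move=> X XF; rewrite /index_of_coset /coset_of_index tpermK enum_rankK_in. Qed.

Lemma coset_of_index_in i : coset_of_index i \in cosets.
Proof. exact: enum_valP. Qed.

Lemma coset_of_index0 : coset_of_index coset0 = F.
Proof. by rewrite /coset_of_index tpermL enum_rankK_in ?group_in_rcosets. Qed.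

Lemma index_of_coset_inj : {in cosets &, injective index_of_coset}.
Proof. by move=> X Y XF YF E; rewrite -(index_of_cosetK XF) -(index_of_cosetK YF) E. Qed.

Definition coset_act s i : 'I_n :=
  if s \in F' then index_of_coset (coset_of_index i :* s) else i.

Lemma coset_act_inj s : injective (coset_act s).
Proof.
move=> i j; rewrite /coset_act; case: ifP => // sF.
move/index_of_coset_inj => /(_ (rcosets_rcoset (coset_of_index_in i) sF))
  /(_ (rcosets_rcoset (coset_of_index_in j) sF)) E.
by rewrite -[i]coset_of_indexK -[j]coset_of_indexK -[coset_of_index i]rcoset1
  -[coset_of_index j]rcoset1 -(mulgV s) !rcosetM E.
Qed.

Definition coset_perm s : {perm 'I_n} := perm (@coset_act_inj s).

Lemma coset_permE s i : s \in F' ->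
  coset_perm s i = index_of_coset (coset_of_index i :* s).
Proof. by move=> sF; rewrite permE /coset_act sF. Qed.

Lemma coset_permM : {in F' &, {morph coset_perm : s t / s * t}}.
Proof.
move=> s t sF tF; apply/permP => i.
by rewrite permM !coset_permE ?groupM // index_of_cosetK ?rcosetM ?rcosets_rcoset
  ?coset_of_index_in.
Qed.

Lemma coset_perm1 : coset_perm 1 = 1.
Proof. by apply/permP => i; rewrite coset_permE // perm1 rcoset1 coset_of_indexK. Qed.

Lemma coset_perm_fix0 s : s \in F' -> (coset_perm s coset0 == coset0) = (s \in F).
Proof.
move=> sF; rewrite coset_permE // coset_of_index0.
apply/eqP/idP => [E | sF0].
  suff <- : F :* s = F by exact: rcoset_refl.
  apply: index_of_coset_inj; rewrite ?rcosets_rcoset ?group_in_rcosets //.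
  by rewrite E -[X in _ = index_of_coset X]coset_of_index0 coset_of_indexK.
by rewrite rcoset_id // -[X in index_of_coset X]coset_of_index0 coset_of_indexK.
Qed.

Variables (aT : finType) (to : {action gT &-> aT}).
Hypothesis sFF' : F \subset F'.
Hypothesis orbit_stable : forall s, s \in F' -> forall a, to a s \in orbit to F a.

Lemma coset_perm_onto i a b : b \in orbit to F a ->
  exists s, [/\ s \in F', to a s = b & coset_perm s coset0 = i].
Proof.
move=> ab; have /rcosetsP[t tF' Et] := coset_of_index_in i.
have /orbitP[u uF Eu] : to b t^-1 \in orbit to F a.
  by apply: orbit_trans ab; apply: orbit_stable; rewrite groupV.
have utF' : u * t \in F' by rewrite groupM // (subsetP sFF').
exists (u * t); split=> //; first by rewrite actM Eu actKV.
by rewrite coset_permE // coset_of_index0 rcosetM rcoset_id // -Et coset_of_indexK.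
Qed.

End CosetPermutation.

(* If [C] had no finite subcover, then for every [N] some class of [near N] would
   have none, and these classes can be chosen nested; their limit lies in an
   open set that contains a whole class around it, a contradiction. *)
Section KoenigCompactness.
Variables (X : Type) (C : X -> Prop) (near : nat -> X -> X -> Prop).
Hypothesis near_sym : forall N x y, near N x y -> near N y x.
Hypothesis near_trans : forall N x y z, near N x y -> near N y z -> near N x z.
Hypothesis near_succ : forall N x y, near N.+1 x y -> near N x y.
Hypothesis near0 : forall x y, near 0 x y.
Hypothesis near_finite : forall N, exists L : seq X,
  (forall x, List.In x L -> C x) /\ forall y, C y -> exists2 x, List.In x L & near N x y.
Hypothesis near_complete : forall xs : nat -> X,
  (forall N, C (xs N)) -> (forall N, near N (xs N) (xs N.+1)) ->
  exists2 y, C y & forall N, near N (xs N) y.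

Variables (I : Type) (O : I -> X -> Prop).
Hypothesis O_open : forall i y, C y -> O i y ->
  exists N, forall z, C z -> near N y z -> O i z.
Hypothesis O_cover : forall y, C y -> exists i, O i y.

Definition finitely_covered (P : X -> Prop) : Prop :=
  exists l : seq I, forall x, P x -> exists i, List.In i l /\ O i x.

Lemma finitely_covered_sub (P Q : X -> Prop) :
  (forall x, P x -> Q x) -> finitely_covered Q -> finitely_covered P.
Proof. by move=> PQ [l Hl]; exists l => x /PQ /Hl. Qed.

Lemma finitely_covered_bigcup (J : Type) (L : seq J) (P : J -> X -> Prop) :
  (forall j, List.In j L -> finitely_covered (P j)) ->
  finitely_covered (fun x => exists2 j, List.In j L & P j x).
Proof.
elim: L => [|j L IH] HL; first by exists [::] => x [].
have [lj Hj] := HL j (or_introl erefl).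
have [l Hl] := IH (fun j' jL => HL j' (or_intror jL)).
exists (lj ++ l) => x [j' [<- | jL] Px].
  by have [i [il Oi]] := Hj x Px; exists i; split=> //; apply: List.in_or_app; left.
have [i [il Oi]] := Hl x (ex_intro2 _ _ j' jL Px).
by exists i; split=> //; apply: List.in_or_app; right.
Qed.

Definition cell N x z : Prop := C z /\ near N x z.

Lemma uncovered_refine N x : ~ finitely_covered (cell N x) ->
  exists y, [/\ C y, near N x y & ~ finitely_covered (cell N.+1 y)].
Proof.
move=> nfc; apply: NNPP => none; apply: nfc.
have [L [LC HL]] := near_finite N.+1.
apply: (@finitely_covered_sub _ (fun z => exists2 y, List.In y L & cell N x y /\ cell N.+1 y z)).
  move=> z [Cz xz]; have [y yL yz] := HL z Cz; exists y => //; split=> //.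
  by split; [exact: LC | apply: near_trans xz (near_sym (near_succ yz))].
apply: finitely_covered_bigcup => y yL; case: (classic (near N x y)) => [xy | nxy].
  apply: (@finitely_covered_sub _ (cell N.+1 y)) => [z [] //|].
  by apply: NNPP => nfc; apply: none; exists y; split=> //; exact: LC.
by exists [::] => z [[_ /nxy]].
Qed.

Theorem koenig_compact : finitely_covered C.
Proof.
apply: NNPP => nfc.
have [x0 Cx0] : exists x0, C x0.
  by apply: NNPP => nC; apply: nfc; exists [::] => x Cx; case: nC; exists x.
pose next N x := epsilon (inhabits x0)
  (fun y => [/\ C y, near N x y & ~ finitely_covered (cell N.+1 y)]).
pose xs N := iteri N next x0.
have xs_bad N : C (xs N) /\ ~ finitely_covered (cell N (xs N)).
  elim: N => [|N [_ IH]]; last by have [] := epsilon_spec (inhabits x0) _ (uncovered_refine IH).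
  by split=> // fc0; apply: nfc; apply: finitely_covered_sub fc0 => z Cz; split.
have xs_near N : near N (xs N) (xs N.+1).
  by have [] := epsilon_spec (inhabits x0) _ (uncovered_refine (xs_bad N).2).
have [y Cy ylim] := near_complete (fun N => (xs_bad N).1) xs_near.
have [i Oiy] := O_cover Cy; have [N HN] := O_open Cy Oiy.
apply: (xs_bad N).2; exists [:: i] => z [Cz xz]; exists i; split; first by left.
exact: HN z Cz (near_trans (near_sym (ylim N)) xz).
Qed.

End KoenigCompactness.

Section Balls.
Variable d : nat.

Fixpoint words N : seq (seq 'I_d) :=
  if N is N'.+1 then [::] :: [seq a :: w | a <- enum 'I_d, w <- words N'] else [::].

Lemma mem_words N w : (w \in words N) = (size w < N).
Proof.
elim: N w => [|N IH] [|a w] //=; rewrite in_cons /= ltnS -IH.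
apply/allpairsP/idP => [[[b u] [_ /= uN [_ ->]]] // | wN].
by exists (a, w); rewrite mem_enum.
Qed.

Definition ball N : seq (vtx d) := pmap insub (words N).

Lemma mem_ball N v : (v \in ball N) = (depth v < N).
Proof. by rewrite /ball mem_pmap_sub mem_words. Qed.

End Balls.

Fixpoint seqs_over (T : Type) (E : seq T) (k : nat) : seq (seq T) :=
  if k is k'.+1 then [seq x :: s | x <- E, s <- seqs_over E k'] else [:: [::]].

Lemma mem_seqs_over (T : eqType) (E : seq T) s : all (mem E) s -> s \in seqs_over E (size s).
Proof.
elim: s => [|x s IH] //= /andP[xE sE].
by apply/allpairsP; exists (x, s); split=> //; exact: IH.
Qed.

Lemma finite_representatives (X : Type) (T : eqType) (E : seq T) (D : X -> T)
    (P : X -> Prop) :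
  (forall x, P x -> D x \in E) ->
  exists L : seq X, (forall x, List.In x L -> P x) /\
    forall y, P y -> exists2 x, List.In x L & D x = D y.
Proof.
elim: E P => [|e E IH] P DE; first by exists [::]; split=> // y /DE.
have DE' x : P x /\ D x != e -> D x \in E.
  by case=> /DE; rewrite in_cons => /orP[/eqP -> /eqP | //].
have [L [LP HL]] := IH _ DE'.
case: (classic (exists x, P x /\ D x = e)) => [[x [Px Dx]] | none].
  exists (x :: L); split=> [x' [<- // | /LP []] // | y Py].
  case: (eqVneq (D y) e) => [Dy | Dy]; first by exists x; [left | rewrite Dx Dy].
  by have [x' x'L] := HL y (conj Py Dy); exists x'; first right.
exists L; split=> [x /LP [] // | y Py].
by case: (eqVneq (D y) e) => [Dy | Dy]; [case: none; exists y | exact: HL].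
Qed.

Section CompactOpenSubgroup.
Variables n d : nat.
Local Notation Hel := (Hel n d).
Local Notation v0 := (Defs.root d).
Implicit Types (x y z : Hel).

Definition in_H0 x : Prop := in_H x /\ forall v, fix0 (x.1 v).

Definition agree N x y : Prop :=
  forall v : vtx d, depth v < N -> x.2 v = y.2 v /\ x.1 v = y.1 v.

Lemma in_H0_aut x : in_H0 x -> is_aut x.2 /\ x.2 v0 = v0.
Proof. by case=> -[]. Qed.

Lemma fix0_divl (p q : {perm 'I_n}) : fix0 p -> fix0 q -> fix0 (p^-1 * q)%g.
Proof. by move=> p0 q0 i i0; rewrite permM -{1}(p0 i i0) permK q0. Qed.

Lemma agree_finite N : exists L : seq Hel, (forall x, List.In x L -> in_H0 x) /\
  forall y, in_H0 y -> exists2 x, List.In x L & agree N x y.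
Proof.
pose D y := [seq (y.2 v, y.1 v) | v <- ball d N].
pose E := seqs_over [seq (w, p) | w <- ball d N, p <- enum {perm 'I_n}] (size (ball d N)).
have DE y : in_H0 y -> D y \in E.
  move=> /in_H0_aut[A R]; rewrite /E -(size_map (fun v => (y.2 v, y.1 v))).
  apply: mem_seqs_over; apply/allP => _ /mapP[v vN ->].
  by apply/allpairsP; exists (y.2 v, y.1 v); rewrite mem_enum mem_ball aut_depth -?mem_ball.
have [L [LH HL]] := finite_representatives DE.
exists L; split=> // y Hy; have [x xL Dxy] := HL y Hy; exists x => // v vN.
rewrite -mem_ball in vN.
move: (congr1 (nth (v0, 1%g) ^~ (index v (ball d N))) Dxy).
by rewrite /D !(nth_map v0) ?index_mem // nth_index // => -[-> ->].
Qed.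

Lemma agree_complete (xs : nat -> Hel) :
  (forall N, in_H0 (xs N)) -> (forall N, agree N (xs N) (xs N.+1)) ->
  exists2 y, in_H0 y & forall N, agree N (xs N) y.
Proof.
move=> xsH0 xs_succ.
have xs_agree M K : M <= K -> agree M (xs M) (xs K).
  elim: K => [|K IH]; first by rewrite leqn0 => /eqP -> v.
  rewrite leq_eqVlt => /orP[/eqP -> // | MK] v vM.
  have [-> ->] := IH MK v vM; exact: xs_succ (leq_trans vM MK).
pose y : Hel := (fun v => (xs (depth v).+1).1 v, fun v => (xs (depth v).+1).2 v).
have y_agree N : agree N (xs N) y.
  by move=> v vN /=; have [-> ->] := xs_agree _ _ vN v (ltnSn _).
exists y => //; have y0 v : fix0 (y.1 v) := (xsH0 _).2 v.
have [A R] : is_aut y.2 /\ y.2 v0 = v0.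
  apply: (aut_of_ball_agree (g := fun N => (xs N).2)) => [N | N v vN].
    exact: in_H0_aut.
  by have [-> _] := y_agree N v vN.
by split=> //; split=> //; exists [::] => v /(_ (y0 v)).
Qed.

Definition Hldiv y z : Hel :=
  (fun v => ((y.1 (y.2 v))^-1 * z.1 (y.2 v))%g, fun v => vinv y.2 (z.2 v)).

Lemma Hprod_div y z : is_aut y.2 -> Hprod y (Hldiv y z) z.
Proof. by move=> A; split=> v /=; rewrite ?aut_vinvK ?aut_vinvKV ?mulKVg. Qed.

Lemma in_H0_div y z : is_aut y.2 -> y.2 v0 = v0 -> in_H z ->
  (forall w, fix0 ((y.1 w)^-1 * z.1 w)%g) -> in_H0 (Hldiv y z).
Proof.
move=> Ay Ry [Az Rz _] yz0; have u0 v : fix0 ((Hldiv y z).1 v) := yz0 (y.2 v).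
split=> //; split; [exact: aut_comp (aut_vinv Ay) Az | | by exists [::] => v /(_ (u0 v))].
by rewrite /= Rz -{1}Ry aut_vinvKV.
Qed.

Lemma H_open_agree (O : Hel -> Prop) y : H_open O -> in_H0 y -> O y ->
  exists N, forall z, in_H0 z -> agree N y z -> O z.
Proof.
move=> [_ Oopen] Hy Oy; have [S HS] := Oopen y Oy.
exists (\max_(v <- S) depth v).+1 => z Hz yz.
have [Ay Ry] := in_H0_aut Hy.
have yz_near v : v \in S -> y.2 v = z.2 v /\ y.1 v = z.1 v.
  by move=> vS; apply: yz; rewrite ltnS (leq_bigmax_seq _ vS).
have [U0 U1] : in_H0 (Hldiv y z).
  by apply: in_H0_div Hz.1 _ => // w; apply: fix0_divl; [exact: Hy.2 | exact: Hz.2].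
apply: (HS (Hldiv y z)); last exact: Hprod_div.
split=> // v vS; have [e2 _] := yz_near v vS.
have [_ e1] : y.2 (y.2 v) = z.2 (y.2 v) /\ y.1 (y.2 v) = z.1 (y.2 v).
  by apply: yz; rewrite aut_depth // ltnS (leq_bigmax_seq _ vS).
by rewrite /= -e1 mulVg -e2 aut_vinvKV.
Qed.

Theorem H0_compact : H_compact in_H0.
Proof.
split=> [x [] // | I O Oopen Ocover].
apply: (koenig_compact (near := agree)) => //.
- by move=> N x y xy v /xy[-> ->].
- by move=> N x y z xy yz v vN; have [-> ->] := xy v vN; exact: yz.
- by move=> N x y xy v vN; apply: xy; exact: ltnW.
- exact: agree_finite.
- exact: agree_complete.
- by move=> i y Hy; exact: H_open_agree.
Qed.

End CompactOpenSubgroup.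

Section Embedding.
Variables (d : nat) (F F' : {group {perm 'I_d}}).
Hypothesis sFF' : F \subset F'.
Hypothesis F_semiregular : forall w : 'I_d, ('C_F[w | 'P] = 1)%g.
Hypothesis F'_orbits : forall s, s \in F' -> forall w : 'I_d, s w \in orbit 'P F w.
Variable a0 : 'I_d.
Local Notation n := #|F' : F|%g.
Local Notation v0 := (Defs.root d).
Local Notation c0 := (coset0 F F').
Local Notation cperm := (coset_perm F F').
Implicit Types (g h : vtx d -> vtx d) (v : vtx d).

Lemma fix0P (p : {perm 'I_n}) : fix0 p <-> p c0 = c0.
Proof. by split=> [|p0 i /eqP i0]; [apply | rewrite (_ : i = c0) //; exact/val_inj/eqP]. Qed.

Lemma fix0_coset_permV s : s \in F' -> fix0 (cperm s)^-1%g <-> s \in F.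
Proof.
move=> sF'; rewrite fix0P -(@coset_perm_fix0 _ F F' s sF').
by split=> [E | /eqP E]; apply/eqP; rewrite -{1}E ?permKV ?permK.
Qed.

Lemma semiregular_fix s a : s \in F -> s a = a -> s = 1%g.
Proof.
move=> sF sa; have : s \in ('C_F[a | 'P])%g by rewrite inE sF; apply/astab1P.
by rewrite F_semiregular => /set1P.
Qed.

(* Indexing the coordinate by the image vertex [g v] makes [embed] multiplicative
   for [Hprod]. *)
Definition embed g : Hel n d := (fun w => (cperm (lperm g (vinv g w)))^-1%g, g).

Lemma embed_in_H g : in_K F F' g -> in_H (embed g).
Proof.
case=> [[A loc [l Hl]] R]; split=> //; exists (map g l) => w nF.
rewrite -(aut_vinvK A w); apply: map_f; apply: Hl => /local_inP[sF _]; apply: nF.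
by apply/fix0_coset_permV => //; have [] := local_inP (loc (vinv g w)).
Qed.

Lemma embed_morph g h : in_K F F' g -> in_K F F' h ->
  Hprod (embed g) (embed h) (embed (fun v => g (h v))).
Proof.
case=> [[Ag lg _] _] [[Ah lh _] _]; split=> // v /=.
have Agh := aut_comp Ag Ah.
have -> : vinv (fun v => g (h v)) (g v) = vinv h v.
  by rewrite -{1}(aut_vinvK Ah v) (aut_vinvKV Agh).
rewrite (lperm_comp (lg _) (lh _)) aut_vinvK // aut_vinvKV //.
have [s1F _] := local_inP (lh (vinv h v)); have [s2F _] := local_inP (lg v).
by rewrite coset_permM // invMg.
Qed.

Lemma local_semiregular_rigid g a : (forall v, local_in F g v) -> g v0 = v0 ->
  g (nbr a v0) = nbr a v0 -> forall v, g v = v /\ lperm g v = 1%g.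
Proof.
move=> loc g0 ga0.
have fix_lperm v b : g v = v -> g (nbr b v) = nbr b v -> lperm g v = 1%g.
  move=> gv gbv; have [sF Hs] := local_inP (loc v); apply: (semiregular_fix (a := b)) sF _.
  by apply: (@nbr_colour_inj _ v); rewrite -[in RHS]gbv Hs gv.
suff: forall w v, val v = w -> g v = v /\ lperm g v = 1%g by move=> + v; apply.
elim=> [|b w IH] v Ev.
  by rewrite (_ : v = v0) ?g0; [split=> //; exact: fix_lperm ga0 | exact/val_inj].
set u := nbr b v; have [gu su] := IH u (depth_nbr_head Ev).
have gv : g v = v by rewrite -[v](nbrK b) -/u (local_inP (loc u)).2 gu su perm1.
by split=> //; apply: (fix_lperm v b) => //; rewrite -/u -[in RHS](nbrK b v) -/u gu.
Qed.

Local Notation embedded := (fun x : Hel n d => exists2 g, in_K F F' g & Heq x (embed g)).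

Lemma embed_discrete : H_discrete embedded.
Proof.
exists [:: v0; nbr a0 v0] => x [g [[Ag lg _] g0] [E1 E2]] [_ x0 xS].
have gF v : local_in F g v.
  have [sF' Hs] := local_inP (lg v); exists (lperm g v) => //.
  by apply/(fix0_coset_permV sF'); have := x0 (g v); rewrite E1 /= aut_vinvKV.
have := xS (nbr a0 v0); rewrite !inE eqxx orbT => /(_ isT) [_]; rewrite E2 => ga0.
have rigid := local_semiregular_rigid gF g0 ga0.
split=> v; first by rewrite E1 /= (rigid _).2 coset_perm1 invg1.
by rewrite E2 /= (rigid v).1.
Qed.

Section CocompactDecomposition.
Variable x : Hel n d.
Hypothesis xH : in_H x.

Definition target (w : seq 'I_d) : 'I_n := ((x.1 (insubd v0 w))^-1)%g c0.

Definition choose_next (w : seq 'I_d) (a : 'I_d) (s : {perm 'I_d}) : {perm 'I_d} :=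
  odflt s [pick t in F' | (t a == s a) && (cperm t c0 == target w)].

Lemma choose_next_back w a s : choose_next w a s a = s a.
Proof. by rewrite /choose_next; case: pickP => [t /and3P[_ /eqP ->]|]. Qed.

Lemma choose_nextP w a s : s \in F' ->
  choose_next w a s \in F' /\ cperm (choose_next w a s) c0 = target w.
Proof.
move=> sF'; rewrite /choose_next; case: pickP => [t /and3P[tF' _ /eqP ->] | none] //.
have [t [tF' ta tc]] := coset_perm_onto sFF' F'_orbits (target w) (F'_orbits sF' a).
have {}ta : t a = s a := ta.
by have := none t; rewrite tF' ta tc !eqxx.
Qed.

Definition adapted_aut : vtx d -> vtx d :=
  tree_aut (choose_next [::] a0 1%g) choose_next_back.

Lemma adapted_lperm v : lperm adapted_aut v \in F' /\
  cperm (lperm adapted_aut v) c0 = (x.1 (adapted_aut v))^-1%g c0.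
Proof.
rewrite lperm_tree_aut /tree_lperm -[adapted_aut v](valKd v0) /=.
elim: (val v) => [|a w [sF' _]] /=; [exact: choose_nextP | exact: choose_nextP].
Qed.

Lemma adapted_aut_in_K : in_K F F' adapted_aut.
Proof.
have A : is_aut adapted_aut := tree_aut_is_aut _ _.
have loc v : forall b, adapted_aut (nbr b v) = nbr (lperm adapted_aut v b) (adapted_aut v).
  by move=> b; rewrite lperm_tree_aut; exact: tree_aut_nbr.
split; last exact: tree_aut_root.
case: xH => _ _ [l Hl]; split=> //.
  by move=> v; exists (lperm adapted_aut v); [exact: (adapted_lperm v).1 |].
exists (map (vinv adapted_aut) l) => v nF; rewrite -(aut_vinvKV A v); apply: map_f.
apply: Hl => x0; apply: nF; exists (lperm adapted_aut v) => //.
have [sF' Hs] := adapted_lperm v; rewrite -(@coset_perm_fix0 _ F F' _ sF') Hs.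
by apply/eqP; rewrite -{1}(x0 c0 erefl) permK.
Qed.

Lemma cocompact_decomposition :
  exists y c, [/\ embedded y, in_H0 c & Hprod y c x].
Proof.
have [[A _ _] R] := adapted_aut_in_K.
exists (embed adapted_aut), (Hldiv (embed adapted_aut) x); split.
- by exists adapted_aut => //; exact: adapted_aut_in_K.
- apply: in_H0_div => // w; apply/fix0P; rewrite /= invgK permM.
  by rewrite (adapted_lperm _).2 aut_vinvK // permKV.
- exact: (Hprod_div (y := embed adapted_aut) x A).
Qed.

End CocompactDecomposition.

End Embedding.

Theorem proposition3 (d : nat) (F F' : {group {perm 'I_d}}) :
  2 < d ->
  F \subset F' ->
  (forall w : 'I_d, ('C_F[w | 'P] = 1)%g) ->
  (forall s, s \in F' -> forall w : 'I_d, s w \in orbit 'P F w) ->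
  exists phi : (vtx d -> vtx d) -> Hel #|F' : F|%g d,
    [/\ (forall g, in_K F F' g -> in_H (phi g)),
        (forall g h, in_K F F' g -> in_K F F' h ->
           Hprod (phi g) (phi h) (phi (fun v => g (h v)))),
        (forall g h, in_K F F' g -> in_K F F' h ->
           Heq (phi g) (phi h) -> g =1 h),
        H_discrete (fun x => exists2 g, in_K F F' g & Heq x (phi g)) &
        H_cocompact (fun x => exists2 g, in_K F F' g & Heq x (phi g))].
Proof.
move=> d_gt2 sFF' F_semiregular F'_orbits.
have a0 : 'I_d := Ordinal (ltn_trans (isT : 0 < 2) d_gt2).
exists (embed F F'); split.
- exact: embed_in_H.
- exact: embed_morph.
- by move=> g h _ _ [].
- exact: embed_discrete F_semiregular a0.
- exists (@in_H0 _ d); split; first exact: H0_compact.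
  exact: cocompact_decomposition sFF' F'_orbits a0.
Qed.
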